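(* For every $n\geq 1$ there is a bijection $\theta:\mathcal O_{n+1}\to\mathcal H_n$ such that for every $T\in\mathcal O_{n+1}$, $$\mathrm{young}_T(1)=\mathrm{tree}(\theta(T)),\qquad \mathrm{eld}(T)=\mathrm{bdeg}(\theta(T)),\qquad \mathrm{imp}(T)=\mathrm{imp}(\theta(T)).$$
   Context: Plane trees: rooted trees with vertices labeled by distinct positive integers in which the children of each vertex are linearly ordered (left to right). A vertex $j$ is a descendant of $i$ if the path from the root to $j$ passes through $i$ (each vertex is a descendant of itself); $\beta_T(i)$ is the smallest descendant of $i$. A child of $i$ is a descendant joined to $i$ by an edge $(i,j)$; children of the same vertex are brothers. In a plane tree $T$, a vertex $j$ is elder if it has a brother $k$ to its right with $\beta_T(k)<\beta_T(j)$. $\mathrm{eld}_T(v)$ = number of elder children of $v$, $\mathrm{eld}(T)$ = number of elder vertices of $T$, $\mathrm{young}_T(v)=\deg_T(v)-\mathrm{eld}_T(v)$ where $\deg_T(v)$ is the number of children. An edge $(i,j)$ is proper if $j$ is an elder child of $i$ or $i<\beta_T(j)$, and improper otherwise; $\mathrm{imp}(T)$ is the number of improper edges. $\mathcal O_{n+1}$ is the set of all plane trees on $[n+1]$ with root $1$. Half-mobile trees: a half-mobile tree on a set $S$ is a rooted tree with two kinds of vertices, labeled (white) and unlabeled (black), such that the white vertices are in bijection with $S$; each black vertex has at least two children, all of them white; there is a fixed cyclic order on the children of each black vertex; the children of white vertices are unordered. For a vertex $v$, $\beta_T(v)$ is the smallest white descendant of $v$. The children of a black vertex are listed in the linear order compatible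 with its cyclic order whose last (rightmost) element is the child with smallest $\beta_T$. An edge $e=(u,v)$ ($v$ a child of $u$) is improper if either $u,v$ are both white and $u>\beta_T(v)$, or $u$ is black, $v$ is its rightmost child, and $u$ has a (white) parent whose label is greater than $\beta_T(v)$. A forest of half-mobile trees on $[n]$ is a graph whose connected components are half-mobile trees and whose set of white vertices is $[n]$; $\mathcal H_n$ is the set of all such forests. For $F\in\mathcal H_n$: $\mathrm{imp}(F)$ is the number of improper edges, $\mathrm{tree}(F)$ the number of component trees, and $\mathrm{bdeg}(F)=\sum_v(\deg_F(v)-1)$, summed over black vertices $v$ with $\deg_F(v)$ the number of children of $v$. *)

From mathcomp Require Import all_boot.
Set Implicit Arguments. Unset Strict Implicit. Unset Printing Implicit Defensive.

(* A plane tree: a labelled vertex with a linearly ordered (left to right)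
   list of subtrees.  Distinct terms are exactly distinct plane trees. *)
Inductive ptree := PNode of nat & seq ptree.

Definition proot (t : ptree) : nat := let: PNode l _ := t in l.
Definition pchildren (t : ptree) : seq ptree := let: PNode _ cs := t in cs.

Fixpoint plabels (t : ptree) : seq nat :=
  match t with PNode l cs => l :: flatten (map plabels cs) end.

Definition pbeta (t : ptree) : nat :=
  let ls := plabels t in foldr minn (head 0 ls) ls.

Fixpoint elder_flags (cs : seq ptree) : seq bool :=
  match cs with
  | [::] => [::]
  | c :: cs' => has (fun d => pbeta d < pbeta c) cs' :: elder_flags cs'
  end.

Definition eld_v (t : ptree) : nat := count id (elder_flags (pchildren t)).
Definition deg_v (t : ptree) : nat := size (pchildren t).
Definition young_v (t : ptree) : nat := deg_v t - eld_v t.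

Fixpoint eldT (t : ptree) : nat :=
  match t with PNode l cs => count id (elder_flags cs) + sumn (map eldT cs) end.

Fixpoint impT (t : ptree) : nat :=
  match t with
  | PNode l cs =>
      sumn [seq (~~ p.1 && ~~ (l < pbeta p.2) : nat) | p <- zip (elder_flags cs) cs]
      + sumn (map impT cs)
  end.

Definition in_O (n : nat) (t : ptree) : bool :=
  (proot t == 1) && perm_eq (plabels t) (iota 1 n.+1).

(* HW l cs : white vertex labelled l with children cs;
   HB cs   : black (unlabelled) vertex with children cs.
   Canonical representatives:
   - children of a white vertex (unordered) are listed by increasing beta;
   - children of a black vertex (cyclically ordered) are listed in the linear
     order compatible with the cyclic order whose last element has smallest
     beta (this representative of the cyclic order is unique);
   - the trees of a forest are listed by increasing beta. *)
Inductive hmtree := HW of nat & seq hmtree | HB of seq hmtree.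

Definition isW (t : hmtree) : bool := if t is HW _ _ then true else false.

Fixpoint hwhites (t : hmtree) : seq nat :=
  match t with
  | HW l cs => l :: flatten (map hwhites cs)
  | HB cs => flatten (map hwhites cs)
  end.

Definition hbeta (t : hmtree) : nat :=
  let ls := hwhites t in foldr minn (head 0 ls) ls.

Fixpoint hwf (t : hmtree) : bool :=
  match t with
  | HW l cs => sorted ltn (map hbeta cs) && all hwf cs
  | HB cs => [&& 1 < size cs, all isW cs,
                 all (fun d => hbeta (last (HB [::]) cs) <= hbeta d) cs
               & all hwf cs]
  end.

Definition in_H (n : nat) (F : seq hmtree) : bool :=
  [&& sorted ltn (map hbeta F), all hwf F
    & perm_eq (flatten (map hwhites F)) (iota 1 n)].

Definition treeF (F : seq hmtree) : nat := size F.

Fixpoint bdeg (t : hmtree) : nat :=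
  match t with
  | HW _ cs => sumn (map bdeg cs)
  | HB cs => (size cs).-1 + sumn (map bdeg cs)
  end.
Definition bdegF (F : seq hmtree) : nat := sumn (map bdeg F).

(* improper edges; p = label of the parent of the current vertex, if it has
   a (necessarily white when the vertex is black) parent *)
Fixpoint himp (p : option nat) (t : hmtree) : nat :=
  match t with
  | HW l cs => sumn [seq (isW c && (l > hbeta c) : nat) + himp (Some l) c | c <- cs]
  | HB cs =>
      (if p is Some l then (l > hbeta (last (HB [::]) cs) : nat) else 0)
      + sumn (map (himp None) cs)
  end.
Definition impF (F : seq hmtree) : nat := sumn (map (himp None) F).

From HB Require Import structures.
From mathcomp Require Import all_boot zify.
Set Implicit Arguments. Unset Strict Implicit. Unset Printing Implicit Defensive.

(* theta deletes the root 1 of T, lowers every label by one and, at each vertex,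
   cuts the list of children into blocks: a block is a maximal run of elder
   children together with the young child closing it on the right.  A block of
   one child stays a white child; a longer block becomes a black vertex whose
   children are the block, in order.  The closing young child has the smallest
   beta of its block, so it is the rightmost child of the black vertex, as the
   cyclic normalisation demands, and the closing children come with increasing
   beta, as the children of a white vertex must.  Hence the young children of the
   root become the trees of theta(T), each elder child adds one to deg - 1 of a
   black vertex, an edge to a young child is improper exactly when the
   corresponding white edge, or the edge above a black vertex and into its
   rightmost child, is improper, and edges to elder children are proper on both
   sides.  Conversely the blocks are the only decomposition of their
   concatenation into nonempty runs ending at their minima with increasing
   minima, which yields the inverse psi. *)

Fixpoint ptree_code (t : ptree) : GenTree.tree nat :=
  let: PNode l cs := t in GenTree.Node l (map ptree_code cs).

Fixpoint ptree_decode (t : GenTree.tree nat) : ptree :=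
  if t is GenTree.Node l ts then PNode l (map ptree_decode ts) else PNode 0 [::].

Lemma ptree_codeK : cancel ptree_code ptree_decode.
Proof.
rewrite /cancel; fix IH 1 => -[l cs] /=; congr PNode.
by elim: cs => //= c cs ->; rewrite IH.
Qed.

HB.instance Definition _ := Equality.copy ptree (can_type ptree_codeK).

Fixpoint hmtree_code (t : hmtree) : GenTree.tree nat :=
  match t with
  | HW l cs => GenTree.Node l.+1 (map hmtree_code cs)
  | HB cs => GenTree.Node 0 (map hmtree_code cs)
  end.

Fixpoint hmtree_decode (t : GenTree.tree nat) : hmtree :=
  match t with
  | GenTree.Node l.+1 ts => HW l (map hmtree_decode ts)
  | GenTree.Node 0 ts => HB (map hmtree_decode ts)
  | GenTree.Leaf _ => HB [::]
  end.

Lemma hmtree_codeK : cancel hmtree_code hmtree_decode.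
Proof.
rewrite /cancel; fix IH 1 => -[l cs|cs] /=; [congr HW|congr HB];
  by elim: cs => //= c cs ->; rewrite IH.
Qed.

HB.instance Definition _ := Equality.copy hmtree (can_type hmtree_codeK).

Lemma ptree_ind_mem (P : ptree -> Prop) :
  (forall l cs, {in cs, forall c, P c} -> P (PNode l cs)) -> forall t, P t.
Proof.
move=> IHnode; fix IH 1 => -[l cs]; apply: IHnode.
(* Clearing IH keeps [done] from closing this goal by the unguarded call [IH d]. *)
elim: cs => [|c cs IHcs] d; first by clear IH; rewrite in_nil.
by rewrite inE => /predU1P [-> | /IHcs].
Qed.

Lemma hmtree_ind_mem (P : hmtree -> Prop) :
  (forall l cs, {in cs, forall c, P c} -> P (HW l cs)) ->
  (forall cs, {in cs, forall c, P c} -> P (HB cs)) -> forall t, P t.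
Proof.
move=> IHW IHB; fix IH 1 => -[l cs|cs]; [apply: IHW|apply: IHB];
  (elim: cs => [|c cs IHcs] d; first by clear IH; rewrite in_nil);
  by rewrite inE => /predU1P [-> | /IHcs].
Qed.

Lemma last_nonnil (T : eqType) (x y : T) b : b != [::] -> last x b = last y b.
Proof. by case: b. Qed.

Lemma last_nonnil_mem (T : eqType) (x : T) b : b != [::] -> last x b \in b.
Proof. by case: b => //= y b _; rewrite mem_last. Qed.

Lemma flatten_map_flatten (A B : Type) (g : A -> seq B) (L : seq (seq A)) :
  flatten (map g (flatten L)) = flatten [seq flatten (map g b) | b <- L].
Proof. by elim: L => //= b L <-; rewrite map_cat flatten_cat. Qed.

Lemma sumn_map_flatten (A : Type) (g : A -> nat) (L : seq (seq A)) :
  sumn (map g (flatten L)) = sumn [seq sumn (map g b) | b <- L].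
Proof. by rewrite map_flatten sumn_flatten -map_comp. Qed.

Lemma sumn_mapD (A : Type) (g h : A -> nat) s :
  sumn [seq g x + h x | x <- s] = sumn (map g s) + sumn (map h s).
Proof. by elim: s => //= x s ->; rewrite addnACA. Qed.

Lemma uniq_flatten_mem (A B : eqType) (g : A -> seq B) s x :
  uniq (flatten (map g s)) -> x \in s -> uniq (g x).
Proof.
move=> + x_s; case/splitPr: x_s => s1 s2.
by rewrite map_cat flatten_cat /= !cat_uniq => /and3P [_ _ /andP []].
Qed.

Lemma uniq_map_of_flatten (A B : eqType) (g : A -> seq B) (h : A -> B) s :
  uniq (flatten (map g s)) -> {in s, forall x, h x \in g x} -> uniq (map h s).
Proof.
elim: s => //= x s IHs; rewrite cat_uniq => /and3P [_ disj uniq_s] hg.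
have hg_s : {in s, forall y, h y \in g y} by move=> y ys; apply: hg; rewrite inE ys orbT.
rewrite IHs // andbT; apply/negP => /mapP [y ys hxy].
move/negP: disj; apply; apply/hasP; exists (h x); last exact: hg (mem_head _ _).
by apply/flattenP; exists (g y); rewrite ?map_f // hxy hg_s.
Qed.

Lemma iota_succn k : iota 1 k = map succn (iota 0 k).
Proof. exact: iotaDl 1 0 k. Qed.

Lemma ltn_pred2_neq m n : 0 < m -> m != n -> (m.-1 < n.-1) = ~~ (n < m).
Proof. by move=> m_gt0 /eqP mn; apply/idP/idP => ?; lia. Qed.

Definition minseq (s : seq nat) : nat := foldr minn (head 0 s) s.

Lemma foldr_minn_le a s x : x \in s -> foldr minn a s <= x.
Proof.
elim: s => //= y s IHs; rewrite inE geq_min.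
by case/predU1P => [->|/IHs ->]; rewrite ?leqnn ?orbT.
Qed.

Lemma foldr_minn_mem a s : foldr minn a s \in a :: s.
Proof.
elim: s => [|y s IHs] /=; first exact: mem_head.
rewrite !inE; case: leqP => _; first by rewrite eqxx orbT.
by move: IHs; rewrite inE => /orP [->|->]; rewrite ?orbT.
Qed.

Lemma minseq_le s x : x \in s -> minseq s <= x.
Proof. exact: foldr_minn_le. Qed.

Lemma minseq_mem s : s != [::] -> minseq s \in s.
Proof.
case: s => // x s _; rewrite /minseq [head _ _]/=.
by have := foldr_minn_mem x (x :: s); rewrite inE => /predU1P [->|]; rewrite ?mem_head.
Qed.

Lemma minseq_eq s m : m \in s -> {in s, forall x, m <= x} -> minseq s = m.
Proof.
move=> ms m_min; apply/eqP; rewrite eqn_leq minseq_le // m_min // minseq_mem //.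
by apply: contraTneq ms => ->.
Qed.

Lemma minseq_pred s : minseq (map predn s) = (minseq s).-1.
Proof.
have [-> //|s_neq0] := eqVneq s [::].
apply: minseq_eq => [|_ /mapP [x xs ->]]; first by rewrite map_f ?minseq_mem.
by rewrite -!subn1 leq_sub2r ?minseq_le.
Qed.

(** * Blocks of elder elements *)

Section ElderBlocks.
Variables (T : eqType) (f : T -> nat) (x0 : T).
Implicit Types (c d : T) (s b : seq T) (L : seq (seq T)).

Definition elderb s c : bool := has (fun d => f d < f c) s.

Fixpoint elder_mask s : bitseq :=
  if s is c :: s' then elderb s' c :: elder_mask s' else [::].

Fixpoint blocks s : seq (seq T) :=
  if s is c :: s' then
    if elderb s' c then (c :: head [::] (blocks s')) :: behead (blocks s')
    else [:: c] :: blocks s'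
  else [::].

Lemma flatten_blocks s : flatten (blocks s) = s.
Proof.
elim: s => //= c s IHs; case: ifP => [elder_c|_]; last by rewrite /= IHs.
by case: (blocks s) IHs elder_c => [<-|b L <-].
Qed.

Lemma nil_notin_blocks s : [::] \notin blocks s.
Proof.
elim: s => //= c s IHs; case: ifP => _; rewrite in_cons //=.
exact: contra (@mem_behead _ _ _) IHs.
Qed.

Variant blocks_cons_spec c s : seq (seq T) -> bool -> Type :=
  | BlocksElder b L of elderb s c & blocks s = b :: L & b != [::] :
      blocks_cons_spec c s ((c :: b) :: L) true
  | BlocksYoung of ~~ elderb s c : blocks_cons_spec c s ([:: c] :: blocks s) false.

Lemma blocksP c s : blocks_cons_spec c s (blocks (c :: s)) (elderb s c).
Proof.
rewrite /=; case: ifPn => elder_c; last exact: BlocksYoung.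
case bsE: (blocks s) => [|b L].
  by move: elder_c; rewrite -(flatten_blocks s) bsE.
have := nil_notin_blocks s; rewrite bsE in_cons negb_or eq_sym => /andP [b_neq0 _].
exact: BlocksElder.
Qed.

Lemma mem_blocks s b d : b \in blocks s -> d \in b -> d \in s.
Proof. by move=> bs db; rewrite -[s]flatten_blocks; apply/flattenP; exists b. Qed.

Lemma block_neq0 s b : b \in blocks s -> b != [::].
Proof. by apply: contraTneq => ->; apply: nil_notin_blocks. Qed.

Lemma last_block_mem s b : b \in blocks s -> last x0 b \in s.
Proof. by move=> bs; apply: mem_blocks bs (last_nonnil_mem _ (block_neq0 bs)). Qed.

Lemma head_block_min s b L :
  blocks s = b :: L -> {in s, forall d, f (last x0 b) <= f d}.
Proof.
elim: s b L => // c s IHs b0 L0.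
case: blocksP => [b L /hasP [e es fec] bsE b_neq0|/hasPn young_c] [<- _] d.
  rewrite /= (last_nonnil c x0 b_neq0) inE => /predU1P [->|/(IHs _ _ bsE)//].
  exact: leq_trans (IHs _ _ bsE e es) (ltnW fec).
by rewrite inE leqNgt => /predU1P [->|/young_c]; rewrite ?ltnn.
Qed.

Lemma block_last_min s b : b \in blocks s -> {in b, forall d, f (last x0 b) <= f d}.
Proof.
elim: s b => // c s IHs b0; case: blocksP => [b L elder_c bsE b_neq0|_].
  rewrite in_cons => /predU1P [-> d|b0L]; last by apply: IHs; rewrite bsE inE b0L orbT.
  rewrite /= (last_nonnil c x0 b_neq0) inE => /predU1P [->|db].
    by case/hasP: elder_c => e es /ltnW; apply/leq_trans/(head_block_min bsE).
  by apply: (head_block_min bsE); apply: mem_blocks db; rewrite bsE mem_head.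
by rewrite in_cons => /predU1P [-> d|/IHs//]; rewrite inE => /eqP ->.
Qed.

Lemma sorted_block_lasts s :
  uniq (map f s) -> sorted ltn [seq f (last x0 b) | b <- blocks s].
Proof.
elim: s => // c s IHs; rewrite map_cons cons_uniq => /andP [fc_notin uniq_fs].
case: blocksP => [b L _ bsE b_neq0|young_c] /=.
  by move: (IHs uniq_fs); rewrite bsE /= (last_nonnil c x0 b_neq0).
have := IHs uniq_fs; case bsE: (blocks s) => [|b L] //= ->; rewrite andbT ltn_neqAle.
have lb_s : last x0 b \in s by apply: last_block_mem; rewrite bsE mem_head.
apply/andP; split; first by apply: contraNneq fc_notin => ->; exact: map_f.
by rewrite leqNgt; apply: (hasPn young_c).
Qed.

Lemma size_elder_mask s : size (elder_mask s) = size s.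
Proof. by elim: s => //= c s ->. Qed.

Lemma size_blocks s : size (blocks s) = count negb (elder_mask s).
Proof.
elim: s => // c s IHs; rewrite [elder_mask _]/=.
by case: blocksP => [b L _ bsE _|_] /=; rewrite -IHs ?bsE.
Qed.

Lemma count_elder_mask s :
  count id (elder_mask s) = sumn [seq (size b).-1 | b <- blocks s].
Proof.
elim: s => // c s IHs; rewrite [elder_mask _]/=.
case: blocksP => [b L _ bsE b_neq0|_] /=; rewrite IHs ?bsE //=.
by rewrite addnA add1n prednK ?lt0n ?size_eq0.
Qed.

Lemma sumn_young_last (P : pred T) s :
  sumn [seq ~~ p.1 && P p.2 : nat | p <- zip (elder_mask s) s]
  = sumn [seq P (last x0 b) : nat | b <- blocks s].
Proof.
elim: s => // c s IHs; rewrite [elder_mask _]/=.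
case: blocksP => [b L _ bsE b_neq0|_] /=; rewrite IHs ?bsE //=.
by rewrite (last_nonnil c x0 b_neq0).
Qed.

Lemma blocks_cat b s :
  b != [::] -> {in b, forall d, f (last x0 b) <= f d} -> uniq (map f (b ++ s)) ->
  {in s, forall d, f (last x0 b) < f d} -> blocks (b ++ s) = b :: blocks s.
Proof.
elim: b => // c b IHb _.
have [-> _ _ s_gt /=|b_neq0] := eqVneq b [::].
  by rewrite ifN //; apply/hasPn => d /s_gt /=; rewrite -leqNgt; apply: ltnW.
rewrite [last x0 _]/= (last_nonnil c x0 b_neq0) cat_cons map_cons cons_uniq.
move=> b_min /andP [fc_notin uniq_fbs] s_gt.
have elder_c : elderb (b ++ s) c.
  have lb_b := last_nonnil_mem x0 b_neq0.
  apply/hasP; exists (last x0 b); first by rewrite mem_cat lb_b.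
  rewrite ltn_neqAle b_min ?mem_head // andbT.
  by apply: contraNneq fc_notin => <-; rewrite map_f // mem_cat lb_b.
by rewrite /= elder_c IHb // => d db; apply: b_min; rewrite inE db orbT.
Qed.

Lemma blocks_flatten L :
  [::] \notin L -> {in L, forall b, {in b, forall d, f (last x0 b) <= f d}} ->
  sorted ltn [seq f (last x0 b) | b <- L] -> uniq (map f (flatten L)) ->
  blocks (flatten L) = L.
Proof.
elim: L => // b L IHL; rewrite in_cons negb_or eq_sym => /andP [b_neq0 L_neq0] L_min.
move=> /= lasts_sorted uniq_fbL.
have := uniq_fbL; rewrite map_cat cat_uniq => /and3P [_ _ uniq_fL].
have L'_min : {in L, forall b, {in b, forall d, f (last x0 b) <= f d}}.
  by move=> b' b'L; apply: L_min; rewrite inE b'L orbT.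
have L_gt : {in flatten L, forall d, f (last x0 b) < f d}.
  move=> d /flattenP [b' b'L db'].
  have /allP /(_ _ (map_f _ b'L)) := order_path_min ltn_trans lasts_sorted.
  by move/leq_trans; apply; apply: L'_min.
rewrite blocks_cat ?IHL ?(path_sorted lasts_sorted) //.
exact: L_min (mem_head _ _).
Qed.
End ElderBlocks.

Lemma blocks_map (T U : eqType) (f : T -> nat) (h : U -> nat) (g : T -> U) s :
  {in s &, {mono g : x y / f x < f y >-> h x < h y}} ->
  blocks h (map g s) = map (map g) (blocks f s).
Proof.
elim: s => // c s IHs mono_g /=.
have -> : elderb h (map g s) (g c) = elderb f s c.
  rewrite /elderb has_map; apply: eq_in_has => d ds /=.
  by apply: mono_g; rewrite inE ?ds ?eqxx ?orbT.
rewrite IHs; last by move=> x y xs ys; apply: mono_g; rewrite inE ?xs ?ys orbT.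
by case: ifP; case: (blocks f s).
Qed.

Lemma elder_flagsE cs : elder_flags cs = elder_mask pbeta cs.
Proof. by elim: cs => //= c cs ->. Qed.

Definition ptree0 : ptree := PNode 0 [::].

Definition pwf (t : ptree) : bool := uniq (plabels t) && (0 \notin plabels t).

Lemma pbetaE t : pbeta t = minseq (plabels t). Proof. by []. Qed.
Lemma hbetaE t : hbeta t = minseq (hwhites t). Proof. by []. Qed.

Lemma pbeta_mem t : pbeta t \in plabels t.
Proof. by case: t => l cs; rewrite pbetaE minseq_mem. Qed.

Lemma hbeta_mem t : hwhites t != [::] -> hbeta t \in hwhites t.
Proof. by rewrite hbetaE; apply: minseq_mem. Qed.

Lemma pwf_child l cs c : pwf (PNode l cs) -> c \in cs -> pwf c.
Proof.
rewrite /pwf /= inE negb_or => /andP [/andP [_ uniq_cs] /andP [_ no0]] c_cs.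
rewrite (uniq_flatten_mem uniq_cs c_cs); apply: contra no0 => c0.
by apply/flattenP; exists (plabels c); rewrite ?map_f.
Qed.

Lemma pwf_beta_gt0 t : pwf t -> 0 < pbeta t.
Proof. by case/andP => _; rewrite lt0n; apply: contraNneq => <-; apply: pbeta_mem. Qed.

Lemma pwf_betas_gt0 l cs : pwf (PNode l cs) -> {in cs, forall c, 0 < pbeta c}.
Proof. by move=> t_wf c /(pwf_child t_wf)/pwf_beta_gt0. Qed.

Lemma pwf_betas l cs : pwf (PNode l cs) -> uniq (map pbeta cs) && (l \notin map pbeta cs).
Proof.
case/andP => /= /andP [l_notin uniq_cs] _.
rewrite (uniq_map_of_flatten uniq_cs) => [|c _]; last exact: pbeta_mem.
apply: contra l_notin => /mapP [c c_cs ->]; apply/flattenP.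
by exists (plabels c); rewrite ?map_f ?pbeta_mem.
Qed.

(** * The map theta *)

Definition hblock (b : seq hmtree) : hmtree := if b is [:: x] then x else HB b.

Definition unblock (c : hmtree) : seq hmtree := if c is HB ds then ds else [:: c].

(* The blocks are cut on the images, compared by [hbeta], so that the recursion
   is structural; [theta_seqE] recovers the blocks of [cs] compared by [pbeta]. *)
Fixpoint theta (t : ptree) : hmtree :=
  let: PNode l cs := t in HW l.-1 (map hblock (blocks hbeta (map theta cs))).

Definition theta_seq (cs : seq ptree) : seq hmtree :=
  map hblock (blocks hbeta (map theta cs)).

(* A black vertex is unfolded by its white parent, so [psi] of a black vertex is
   the junk value [ptree0].  The match inlines [unblock] for the guard checker;
   [psiE] is the folded form. *)
Fixpoint psi (t : hmtree) : ptree :=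
  if t is HW l cs then
    PNode l.+1 (flatten [seq if c is HB ds then map psi ds else [:: psi c] | c <- cs])
  else ptree0.

Lemma psiE l cs : psi (HW l cs) = PNode l.+1 (flatten [seq map psi (unblock c) | c <- cs]).
Proof. by rewrite /=; congr (PNode _ (flatten _)); apply: eq_map; case. Qed.

Lemma thetaE l cs : theta (PNode l cs) = HW l.-1 (theta_seq cs). Proof. by []. Qed.

Lemma isW_theta t : isW (theta t). Proof. by case: t. Qed.

Lemma isW_hwhites c : isW c -> hwhites c != [::]. Proof. by case: c. Qed.

Lemma hwhites_hblock b : b != [::] -> hwhites (hblock b) = hwhites (HB b).
Proof. by case: b => [|x [|y b]] //= _; rewrite cats0. Qed.

Lemma hbeta_hblock b : b != [::] -> hbeta (hblock b) = hbeta (HB b).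
Proof. by move=> b_neq0; rewrite !hbetaE hwhites_hblock. Qed.

Lemma hwhites_unblock c : flatten (map hwhites (unblock c)) = hwhites c.
Proof. by case: c => //= l cs; rewrite cats0. Qed.

Lemma hbeta_HB ds d : d \in ds -> hwhites d != [::] ->
  {in ds, forall e, hbeta d <= hbeta e} -> hbeta (HB ds) = hbeta d.
Proof.
move=> d_ds d_neq0 d_min; rewrite hbetaE.
apply: minseq_eq => [|y /flattenP [_ /mapP [e e_ds ->] ye]].
  by apply/flattenP; exists (hwhites d); rewrite ?map_f ?hbeta_mem.
exact: leq_trans (d_min e e_ds) (minseq_le ye).
Qed.

Lemma hwhites_hblocks L : [::] \notin L ->
  flatten (map hwhites (map hblock L)) = flatten (map hwhites (flatten L)).
Proof.
rewrite flatten_map_flatten; elim: L => //= b L IHL.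
by rewrite in_cons negb_or eq_sym => /andP [b_neq0 /IHL ->]; rewrite hwhites_hblock.
Qed.

Lemma hwhites_theta t : hwhites (theta t) = map predn (plabels t).
Proof.
elim/ptree_ind_mem: t => l cs IHcs /=.
rewrite hwhites_hblocks ?nil_notin_blocks // flatten_blocks map_flatten -!map_comp.
by congr (_ :: flatten _); apply/eq_in_map => c /IHcs.
Qed.

Lemma hbeta_theta t : hbeta (theta t) = (pbeta t).-1.
Proof. by rewrite hbetaE pbetaE hwhites_theta minseq_pred. Qed.

Lemma theta_seqE cs : {in cs, forall c, 0 < pbeta c} ->
  theta_seq cs = [seq hblock (map theta b) | b <- blocks pbeta cs].
Proof.
move=> betas_gt0; rewrite /theta_seq (blocks_map (f := pbeta)) -?map_comp // => x y xs ys /=.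
by rewrite !hbeta_theta; have := betas_gt0 x xs; have := betas_gt0 y ys; lia.
Qed.

Lemma last_map_theta b : b != [::] -> last (HB [::]) (map theta b) = theta (last ptree0 b).
Proof. by case: b => //= c b _; rewrite last_map. Qed.

Lemma hbeta_theta_block_min cs b : b \in blocks pbeta cs ->
  {in map theta b, forall e, hbeta (last (HB [::]) (map theta b)) <= hbeta e}.
Proof.
move=> b_cs _ /mapP [c c_b ->]; rewrite last_map_theta ?(block_neq0 b_cs) //.
by rewrite !hbeta_theta -!subn1 leq_sub2r // (block_last_min _ b_cs).
Qed.

Lemma hbeta_hblock_theta cs b : b \in blocks pbeta cs ->
  hbeta (hblock (map theta b)) = (pbeta (last ptree0 b)).-1.
Proof.
move=> b_cs; have b_neq0 := block_neq0 b_cs.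
have tb_neq0 : map theta b != [::] by case: (b) b_neq0.
rewrite hbeta_hblock // (hbeta_HB _ _ (hbeta_theta_block_min b_cs)).
- by rewrite last_map_theta // hbeta_theta.
- exact: last_nonnil_mem.
- by rewrite last_map_theta // isW_hwhites ?isW_theta.
Qed.

Lemma hwf_hblock b : b != [::] -> all isW b -> all hwf b ->
  {in b, forall d, hbeta (last (HB [::]) b) <= hbeta d} -> hwf (hblock b).
Proof.
case: b => [|x [|y b]] // _; first by rewrite /= !andbT.
by move=> bW bwf b_min; apply/and4P; split => //; apply/allP.
Qed.

Lemma hwf_theta t : pwf t -> hwf (theta t).
Proof.
elim/ptree_ind_mem: t => l cs IHcs t_wf.
have /andP [uniq_betas _] := pwf_betas t_wf.
have betas_gt0 := pwf_betas_gt0 t_wf.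
rewrite thetaE theta_seqE //=; apply/andP; split.
  have -> : [seq hbeta c | c <- [seq hblock (map theta b) | b <- blocks pbeta cs]]
          = map predn [seq pbeta (last ptree0 b) | b <- blocks pbeta cs].
    by rewrite -!map_comp; apply/eq_in_map => b /hbeta_hblock_theta.
  apply: (homo_sorted_in (P := [pred x | 0 < x])) (sorted_block_lasts _ uniq_betas).
    by move=> x y; rewrite !inE => x_gt0 y_gt0; lia.
  by apply/allP => _ /mapP [b /(last_block_mem ptree0) /betas_gt0 ? ->].
apply/allP => _ /mapP [b b_cs ->]; apply: hwf_hblock.
- by have := block_neq0 b_cs; case: (b).
- by apply/allP => _ /mapP [c _ ->]; apply: isW_theta.
- apply/allP => _ /mapP [c c_b ->]; have c_cs := mem_blocks b_cs c_b.
  exact: IHcs c_cs (pwf_child t_wf c_cs).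
- exact: hbeta_theta_block_min b_cs.
Qed.

Lemma bdeg_hblock b : b != [::] -> bdeg (hblock b) = (size b).-1 + sumn (map bdeg b).
Proof. by case: b => [|x [|y b]] //= _; rewrite addn0. Qed.

Lemma bdeg_theta t : pwf t -> bdeg (theta t) = eldT t.
Proof.
elim/ptree_ind_mem: t => l cs IHcs t_wf.
rewrite thetaE theta_seqE; last exact: pwf_betas_gt0 t_wf.
rewrite /= elder_flagsE count_elder_mask.
transitivity (sumn [seq (size b).-1 + sumn (map (bdeg \o theta) b) | b <- blocks pbeta cs]).
  rewrite -map_comp; congr sumn; apply/eq_in_map => b b_cs /=.
  rewrite bdeg_hblock ?size_map -?map_comp //.
  by have := block_neq0 b_cs; case: (b).
rewrite sumn_mapD -sumn_map_flatten flatten_blocks; congr (_ + sumn _).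
apply/eq_in_map => c c_cs /=; exact: IHcs c_cs (pwf_child t_wf c_cs).
Qed.

Lemma himp_white p q c : isW c -> himp p c = himp q c.
Proof. by case: c. Qed.

Lemma himp_Some0 c : himp (Some 0) c = himp None c.
Proof. by case: c => //= ds; rewrite ltn0. Qed.

Lemma himp_hblock l b : b != [::] -> all isW b ->
  (isW (hblock b) && (l > hbeta (hblock b)) : nat) + himp (Some l) (hblock b)
  = (l > hbeta (last (HB [::]) b)) + sumn (map (himp None) b).
Proof.
case: b => [|x [|y b]] //= _ /andP [xW _] //.
by rewrite xW (himp_white _ None xW) addn0.
Qed.

Lemma himp_theta t : pwf t -> himp None (theta t) = impT t.
Proof.
elim/ptree_ind_mem: t => l cs IHcs t_wf.
have betas_gt0 := pwf_betas_gt0 t_wf.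
have /andP [_ l_notin] := pwf_betas t_wf.
rewrite thetaE theta_seqE // /= elder_flagsE.
rewrite (sumn_young_last _ ptree0 (fun c => ~~ (l < pbeta c))).
transitivity (sumn [seq (l.-1 > (pbeta (last ptree0 b)).-1) + sumn (map (himp None \o theta) b)
                   | b <- blocks pbeta cs]).
  rewrite -map_comp; congr sumn; apply/eq_in_map => b b_cs /=.
  have tb_neq0 : map theta b != [::] by have := block_neq0 b_cs; case: (b).
  rewrite himp_hblock // ?last_map_theta ?hbeta_theta ?(block_neq0 b_cs) -?map_comp //.
  by apply/allP => _ /mapP [c _ ->]; apply: isW_theta.
rewrite sumn_mapD -sumn_map_flatten flatten_blocks; congr (sumn _ + sumn _).
  apply/eq_in_map => b /(last_block_mem ptree0) lb_cs /=; congr nat_of_bool.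
  have lb_gt0 := betas_gt0 _ lb_cs.
  have : l != pbeta (last ptree0 b) by apply: contraNneq l_notin => ->; apply: map_f.
  by rewrite eq_sym; apply: ltn_pred2_neq.
apply/eq_in_map => c c_cs /=; exact: IHcs c_cs (pwf_child t_wf c_cs).
Qed.

(** * theta and psi are mutually inverse *)

Lemma unblock_hblock b : all isW b -> unblock (hblock b) = b.
Proof. by case: b => [|[l cs|ds] [|y b]]. Qed.

Lemma psi_theta t : pwf t -> psi (theta t) = t.
Proof.
elim/ptree_ind_mem: t => l cs IHcs t_wf.
have l_gt0 : 0 < l by case/andP: t_wf => _; rewrite inE negb_or lt0n eq_sym => /andP [].
rewrite thetaE psiE prednK //; congr PNode.
have -> : [seq map psi (unblock c) | c <- theta_seq cs]
        = map (map psi) (blocks hbeta (map theta cs)).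
  rewrite -map_comp; apply/eq_in_map => b b_L /=; rewrite unblock_hblock //.
  by apply/allP => _ /(mem_blocks b_L) /mapP [c _ ->]; apply: isW_theta.
rewrite -map_flatten flatten_blocks -map_comp map_id_in // => c c_cs.
exact: IHcs c_cs (pwf_child t_wf c_cs).
Qed.

Lemma unblock_neq0 c : hwf c -> unblock c != [::].
Proof. by case: c => // -[]. Qed.

Lemma unblock_white c : hwf c -> all isW (unblock c).
Proof. by case: c => //= ds /and4P []. Qed.

Lemma unblockK c : hwf c -> hblock (unblock c) = c.
Proof. by case: c => // -[|x [|y ds]]. Qed.

Lemma unblock_last_min c : hwf c ->
  {in unblock c, forall d, hbeta (last (HB [::]) (unblock c)) <= hbeta d}.
Proof. by case: c => [l cs _ d|ds /and4P [_ _ /allP ds_min _]] //; rewrite inE => /eqP ->. Qed.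

Lemma hbeta_last_unblock c : hwf c -> hbeta (last (HB [::]) (unblock c)) = hbeta c.
Proof.
move=> c_wf; have ub_neq0 := unblock_neq0 c_wf; have lb_ub := last_nonnil_mem (HB [::]) ub_neq0.
rewrite -{2}(unblockK c_wf) hbeta_hblock // (hbeta_HB lb_ub _ (unblock_last_min c_wf)) //.
exact/isW_hwhites/(allP (unblock_white c_wf)).
Qed.

Lemma theta_seq_psi cs :
  sorted ltn (map hbeta cs) -> all hwf cs -> uniq (flatten (map hwhites cs)) ->
  {in cs, forall c, map theta (map psi (unblock c)) = unblock c} ->
  theta_seq (flatten [seq map psi (unblock c) | c <- cs]) = cs.
Proof.
move=> sorted_cs /allP cs_wf uniq_cs IHcs.
rewrite /theta_seq map_flatten -map_comp.
have -> : [seq map theta (map psi (unblock c)) | c <- cs] = map unblock cs.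
  exact/eq_in_map.
rewrite (blocks_flatten (x0 := HB [::])).
- by rewrite -map_comp map_id_in // => c /cs_wf /unblockK.
- by apply/mapP => -[c /cs_wf /unblock_neq0 /eqP ub_neq0 /esym].
- by move=> _ /mapP [c /cs_wf /unblock_last_min + ->].
- suff -> : [seq hbeta (last (HB [::]) b) | b <- map unblock cs] = map hbeta cs by [].
  by rewrite -map_comp; apply/eq_in_map => c /cs_wf /hbeta_last_unblock.
apply: (uniq_map_of_flatten (g := hwhites)).
  by rewrite flatten_map_flatten -map_comp (eq_map hwhites_unblock).
move=> d /flattenP [_ /mapP [c /cs_wf c_wf ->] d_c].
exact/hbeta_mem/isW_hwhites/(allP (unblock_white c_wf)).
Qed.

Lemma theta_psi_unblock w : hwf w -> uniq (hwhites w) ->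
  map theta (map psi (unblock w)) = unblock w.
Proof.
elim/hmtree_ind_mem: w => [l cs IHcs|ds IHds].
  move=> /andP [sorted_cs cs_wf] /andP [_ uniq_cs].
  have -> : map theta (map psi (unblock (HW l cs))) = [:: theta (psi (HW l cs))] by [].
  rewrite psiE thetaE theta_seq_psi // => c c_cs.
  by apply: (IHcs c c_cs); [exact: (allP cs_wf) | exact: uniq_flatten_mem uniq_cs c_cs].
move=> /and4P [_ /allP ds_W _ /allP ds_wf] uniq_ds.
rewrite [unblock _]/= -map_comp map_id_in // => d d_ds.
have := IHds d d_ds (ds_wf d d_ds) (uniq_flatten_mem uniq_ds d_ds).
by have := ds_W d d_ds; case: d {d_ds} => // l cs _ /(congr1 (head (HB [::]))).
Qed.

Lemma theta_psi w : hwf w -> uniq (hwhites w) -> isW w -> theta (psi w) = w.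
Proof.
case: w => // l cs w_wf uniq_w _.
by move/(congr1 (head (HB [::]))): (theta_psi_unblock w_wf uniq_w).
Qed.

Lemma plabels_psi_unblock w : hwf w ->
  flatten (map plabels (map psi (unblock w))) = map succn (hwhites w).
Proof.
elim/hmtree_ind_mem: w => [l cs IHcs|ds IHds].
  move=> /andP [_ /allP cs_wf].
  have -> : flatten (map plabels (map psi (unblock (HW l cs)))) = plabels (psi (HW l cs)).
    by rewrite /= cats0.
  rewrite psiE /= flatten_map_flatten -map_comp map_flatten -map_comp.
  by congr (_ :: flatten _); apply/eq_in_map => c c_cs; apply: IHcs (cs_wf c c_cs).
move=> /and4P [_ /allP ds_W _ /allP ds_wf].
rewrite [unblock _]/= map_flatten -!map_comp; congr flatten; apply/eq_in_map => d d_ds /=.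
have := IHds d d_ds (ds_wf d d_ds).
by have := ds_W d d_ds; case: d {d_ds} => // l cs; rewrite /= cats0.
Qed.

Lemma plabels_psi w : hwf w -> isW w -> plabels (psi w) = map succn (hwhites w).
Proof. by case: w => // l cs w_wf _; rewrite -plabels_psi_unblock //= cats0. Qed.

(** * Forests *)

(* A forest [F] is handled as the children of the white root [HW 0 F], the image
   of the root 1 of a tree of [in_O n]. *)
Definition theta_forest (t : ptree) : seq hmtree := theta_seq (pchildren t).

Definition psi_forest (F : seq hmtree) : ptree := psi (HW 0 F).

Lemma theta_forestE t : proot t = 1 -> theta t = HW 0 (theta_forest t).
Proof. by case: t => l cs /= ->. Qed.

Lemma in_O_pwf n t : in_O n t -> pwf t.
Proof.
case/andP => _ perm_t.
by rewrite /pwf (perm_uniq perm_t) iota_uniq (perm_mem perm_t) mem_iota.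
Qed.

Lemma in_HE n F : in_H n F = hwf (HW 0 F) && perm_eq (hwhites (HW 0 F)) (iota 0 n.+1).
Proof. by rewrite /in_H /= perm_cons andbA. Qed.

Lemma theta_forest_in_H n t : in_O n t -> in_H n (theta_forest t).
Proof.
move=> Ot; have /andP [/eqP root1 perm_t] := Ot.
rewrite in_HE -theta_forestE // hwf_theta ?(in_O_pwf Ot) // hwhites_theta.
by rewrite -(mapK succnK (iota 0 n.+1)) -iota_succn perm_map.
Qed.

Lemma psi_forest_in_O n F : in_H n F -> in_O n (psi_forest F).
Proof.
rewrite in_HE => /andP [F_wf perm_F]; rewrite /in_O /psi_forest plabels_psi //.
by rewrite iota_succn perm_map.
Qed.

Lemma psi_theta_forest n t : in_O n t -> psi_forest (theta_forest t) = t.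
Proof.
move=> Ot; have /andP [/eqP root1 _] := Ot.
by rewrite /psi_forest -theta_forestE // psi_theta // (in_O_pwf Ot).
Qed.

Lemma theta_psi_forest n F : in_H n F -> theta_forest (psi_forest F) = F.
Proof.
rewrite in_HE => /andP [F_wf perm_F].
have uniq_F : uniq (hwhites (HW 0 F)) by rewrite (perm_uniq perm_F) iota_uniq.
by move: (theta_psi F_wf uniq_F isT); rewrite /psi_forest psiE thetaE => -[].
Qed.

Lemma theta_forest_stats n t : in_O n t ->
  [/\ young_v t = treeF (theta_forest t), eldT t = bdegF (theta_forest t)
    & impT t = impF (theta_forest t)].
Proof.
move=> Ot; have t_wf := in_O_pwf Ot; have /andP [/eqP root1 _] := Ot.
rewrite -(bdeg_theta t_wf) -(himp_theta t_wf) theta_forestE //; split=> //.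
  case: t t_wf {Ot root1} => l cs t_wf.
  rewrite /young_v /deg_v /eld_v /treeF /theta_forest /= theta_seqE; last exact: pwf_betas_gt0 t_wf.
  by rewrite size_map size_blocks elder_flagsE -(size_elder_mask pbeta) -(count_predC id) addKn.
by rewrite /impF /=; congr sumn; apply: eq_map => c; rewrite ltn0 andbF himp_Some0.
Qed.

Theorem proposition3p2 (n : nat) : 1 <= n ->
  exists theta : {T : ptree | in_O n T} -> {F : seq hmtree | in_H n F},
    bijective theta /\
    forall T : {T : ptree | in_O n T},
      [/\ young_v (proj1_sig T) = treeF (proj1_sig (theta T)),
          eldT (proj1_sig T) = bdegF (proj1_sig (theta T))
        & impT (proj1_sig T) = impF (proj1_sig (theta T))].
Proof.
(* The bijection exists for n = 0 as well. *)
move=> _.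
exists (fun T => exist _ (theta_forest (val T)) (theta_forest_in_H (valP T))); split.
  exists (fun F => exist _ (psi_forest (val F)) (psi_forest_in_O (valP F))).
    by move=> [T OT]; apply: val_inj; exact: psi_theta_forest OT.
  by move=> [F HF]; apply: val_inj; exact: theta_psi_forest HF.
by move=> [T OT]; exact: theta_forest_stats OT.
Qed.
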